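(* Let $N,k,R$ be positive integers with $N>4kR$, and consider the open chain with sites $1,\dots,N$ and distance $|i-j|$. Let $H$ be an operator (not necessarily Hermitian) on $(\mathbb{C}^2)^{\otimes N}$ that is $k$-local and has range at most $R$. If $H|W^p\rangle=E_p|W^p\rangle$ with $E_p\in\mathbb{C}$ for every $p\in\{0,1,\dots,N\}$, then there exist constants $\Omega,\omega\in\mathbb{C}$ such that $E_p=\Omega+\omega p$ for all $p\in\{0,1,\dots,N\}$ (with $\Omega,\omega\in\mathbb{R}$ if $H$ is Hermitian).
   Context: System of $N$ qubits on sites $1,\dots,N$ with local basis $|0\rangle,|1\rangle$. For each site $i$, $s_i^\dagger$ acts on site $i$ as $s^\dagger|0\rangle=|1\rangle$, $s^\dagger|1\rangle=0$, and $s_i=(s_i^\dagger)^\dagger$ (so $s|1\rangle=|0\rangle$, $s|0\rangle=0$); $n_i=s_i^\dagger s_i$. $|\overline 0\rangle=|0\rangle^{\otimes N}$. Every operator has a unique expansion as a linear combination of normal-ordered strings $s^\dagger_{j_1}\cdots s^\dagger_{j_n}s_{k_1}\cdots s_{k_m}$ (the $j$'s pairwise distinct, the $k$'s pairwise distinct, overlaps between the two sets allowed; the empty string is $I$); the sites of such a string are $\{j_1,\dots,j_n,k_1,\dots,k_m\}$. A string has range $R$, where $R$ is the smallest positive integer such that all pairwise distances between its sites are $<R$. An operator has range at most $R$ if every string with nonzero coefficient in its expansion has range at most $R$; it is $k$-local if every such string involves at most $k$ distinct sites. Dicke states: $S^\dagger=\sum_{i=1}^N s_i^\dagger$ and, for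 $p=0,\dots,N$, $|W^p\rangle=(S^\dagger)^p|\overline 0\rangle/\|(S^\dagger)^p|\overline 0\rangle\|$, i.e. the normalized equal-weight superposition of all basis states with exactly $p$ sites in state $|1\rangle$. *)

(* Complex scalars: an arbitrary numClosedFieldType C
   (e.g. the complex numbers), with conjugation ^* and sqrtC. *)
From HB Require Import structures.
From mathcomp Require Import all_boot all_order all_algebra.
Set Implicit Arguments. Unset Strict Implicit. Unset Printing Implicit Defensive.
Import Order.TTheory GRing.Theory Num.Theory.
Local Open Scope ring_scope.

Section Qubits.
Variables (C : numClosedFieldType) (N : nat).

(* Computational basis of (C^2)^{⊗N}: a basis state is identified with the
   set of sites in state |1>.  Sites 1..N are represented by 'I_N (0..N-1). *)
Definition state := {set 'I_N} -> C.
(* An operator is given by its matrix entries  op x y = <x|op|y>. *)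
Definition op := {set 'I_N} -> {set 'I_N} -> C.

Definition apply (A : op) (v : state) : state := fun x => \sum_y A x y * v y.
Definition mulop (A B : op) : op := fun x y => \sum_z A x z * B z y.
Definition idop : op := fun x y => (x == y)%:R.

(* s_i^dagger : |0>_i -> |1>_i, |1>_i -> 0 ;  s_i : |1>_i -> |0>_i, |0>_i -> 0 *)
Definition sdag (i : 'I_N) : op := fun x y => ((i \notin y) && (x == i |: y))%:R.
Definition sann (i : 'I_N) : op := fun x y => ((i \in y) && (x == y :\ i))%:R.

(* normal-ordered string  s^dag_{j1}...s^dag_{jn} s_{k1}...s_{km}
   (J = {j1..jn}, K = {k1..km}; factors on distinct sites commute) *)
Definition nstring (J K : {set 'I_N}) : op :=
  foldr (fun j A => mulop (sdag j) A)
        (foldr (fun k A => mulop (sann k) A) idop (enum K)) (enum J).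

Definition expansion (c : {set 'I_N} -> {set 'I_N} -> C) : op :=
  fun x y => \sum_(J : {set 'I_N}) \sum_(K : {set 'I_N}) c J K * nstring J K x y.

Definition dist (i j : 'I_N) : nat := maxn i j - minn i j.

(* H is k-local and has range at most R: in its (unique) normal-ordered
   expansion, every string with nonzero coefficient involves at most k
   distinct sites and all pairwise distances of its sites are < R. *)
Definition klocal_range (H : op) (k R : nat) : Prop :=
  exists c : {set 'I_N} -> {set 'I_N} -> C,
    H = expansion c /\
    forall J K, c J K != 0 ->
      (#|J :|: K| <= k)%N /\
      forall i j, i \in J :|: K -> j \in J :|: K -> (dist i j < R)%N.

Definition hermitian_op (H : op) : Prop := forall x y, H x y = (H y x)^*.

Definition vac : state := fun x => (x == set0)%:R.
Definition Sdag : op := fun x y => \sum_i sdag i x y.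
Definition dicke_un (p : nat) : state := iter p (apply Sdag) vac.
Definition vnorm (v : state) : C := sqrtC (\sum_x `|v x| ^+ 2).
Definition dicke (p : nat) : state :=
  fun x => (vnorm (dicke_un p))^-1 * dicke_un p x.

End Qubits.

From HB Require Import structures.
From mathcomp Require Import all_boot all_order all_algebra.
From mathcomp Require Import zify.
Set Implicit Arguments.
Unset Strict Implicit.
Unset Printing Implicit Defensive.
Import Order.TTheory GRing.Theory Num.Theory.
Local Open Scope ring_scope.

(* The Dicke state |W^p> is proportional to the indicator of the weight-p
   sector, so the eigenvalue equation evaluated at a basis state x of weight p
   says that the sum of the entries of row x of H over that sector,
   [sector_rowsum H x], is E_p.  A normal-ordered string contributes to this
   row sum through x restricted to its own sites only.  Since the range of H
   is at most R < N, no string touches both end sites 1 and N, so adding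
   either end site to a set avoiding both changes the row sum independently
   of the other: E_(q+2) + E_q = 2 E_(q+1), and E is affine.  For Hermitian H,
   E_p is an eigenvalue of a Hermitian matrix, hence real.  Only the range
   bound (N > R) is used. *)

Lemma affine_of_second_difference (V : pzRingType) (n : nat) (f : nat -> V) :
  (forall q, (q.+2 <= n)%N -> f q.+2 + f q = f q.+1 + f q.+1) ->
  forall p, (p <= n)%N -> f p = f 0%N + (f 1%N - f 0%N) * p%:R.
Proof.
move=> second_diff0.
have diff_const q : (q < n)%N -> f q.+1 - f q = f 1%N - f 0%N.
  elim: q => // q IH lt_q1n; rewrite -IH; last exact: ltnW.
  by apply/eqP; rewrite subr_eq addrAC eq_sym subr_eq eq_sym second_diff0.
move=> p le_pn.
have -> : f p = f 0%N + \sum_(0 <= q < p) (f q.+1 - f q).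
  by rewrite telescope_sumr // addrC subrK.
rewrite (@eq_big_nat _ _ _ 0 p _ (fun=> f 1%N - f 0%N)) => [|q /andP[_ lt_qp]].
  by rewrite sumr_const_nat subn0 mulr_natr.
by rewrite diff_const // (leq_trans lt_qp).
Qed.

Lemma sumr_delta_r (R : pzSemiRingType) (T : finType) (F : T -> R) (w : T) :
  \sum_z F z * (z == w)%:R = F w.
Proof.
rewrite (bigD1 w) //= eqxx mulr1 big1 ?addr0 // => z /negbTE ->.
by rewrite mulr0.
Qed.

Lemma disjoint_setU1 (T : finType) (a : T) (A B : {set T}) :
  [disjoint a |: A & B] = (a \notin B) && [disjoint A & B].
Proof. by rewrite -setI_eq0 setIUl setU_eq0 !setI_eq0 disjoints1. Qed.

Lemma exists_subset_card (T : finType) (A : {set T}) (q : nat) :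
  (q <= #|A|)%N -> exists2 x : {set T}, x \subset A & #|x| = q.
Proof.
move=> le_qA; exists [set:: take q (enum A)].
  by apply/subsetP => a; rewrite inE => /mem_take; rewrite mem_enum.
rewrite cardsE (card_uniqP _) ?take_uniq ?enum_uniq // size_take -cardE.
by case: ltngtP le_qA => // ->.
Qed.

Section Qubits.
Variables (C : numClosedFieldType) (N : nat).
Implicit Types (x y J K : {set 'I_N}) (A B H : op C N) (v : state C N).

Lemma sdagE i x y : sdag C i x y = (i \in x)%:R * (y == x :\ i)%:R.
Proof.
rewrite /sdag -natrM mulnb; congr (_ %:R); congr (nat_of_bool _).
apply/andP/andP => [[i_y /eqP ->] | [i_x /eqP ->]].
  by rewrite setU11 setU1K.
by rewrite setD11 setD1K.
Qed.

Lemma sannE k x y : sann C k x y = (k \notin x)%:R * (y == k |: x)%:R.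
Proof.
rewrite /sann -natrM mulnb; congr (_ %:R); congr (nat_of_bool _).
apply/andP/andP => [[k_y /eqP ->] | [k_x /eqP ->]].
  by rewrite setD11 setD1K.
by rewrite setU11 setU1K.
Qed.

Lemma mulop_sdagE j B x y : mulop (sdag C j) B x y = (j \in x)%:R * B (x :\ j) y.
Proof.
rewrite /mulop; under eq_bigr => z _ do rewrite sdagE mulrAC.
exact: sumr_delta_r.
Qed.

Lemma mulop_sannE k B x y : mulop (sann C k) B x y = (k \notin x)%:R * B (k |: x) y.
Proof.
rewrite /mulop; under eq_bigr => z _ do rewrite sannE mulrAC.
exact: sumr_delta_r.
Qed.

Lemma foldr_mulop_sannE B (s : seq 'I_N) x y : uniq s ->
  foldr (fun k A => mulop (sann C k) A) B s x y =
  [disjoint x & [set:: s]]%:R * B (x :|: [set:: s]) y.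
Proof.
elim: s x => [|k s IH] x /=.
  by rewrite set_nil setU0 -setI_eq0 setI0 eqxx mul1r.
case/andP=> k_s uniq_s; rewrite mulop_sannE IH // set_cons -setUA setUCA.
rewrite disjoint_setU1 [in RHS]disjoint_sym disjoint_setU1 inE k_s.
by rewrite disjoint_sym mulrA -natrM mulnb.
Qed.

Lemma foldr_mulop_sdagE B (t : seq 'I_N) x y : uniq t ->
  foldr (fun j A => mulop (sdag C j) A) B t x y =
  ([set:: t] \subset x)%:R * B (x :\: [set:: t]) y.
Proof.
elim: t x => [|j t IH] x /=.
  by rewrite set_nil sub0set setD0 mul1r.
case/andP=> j_t uniq_t; rewrite mulop_sdagE IH // subsetD1 setDDl set_cons.
by rewrite subUset sub1set mulrA -natrM mulnb inE j_t andbT.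
Qed.

Lemma nstringE J K x y : nstring C J K x y =
  (J \subset x)%:R * [disjoint x :\: J & K]%:R * (y == (x :\: J) :|: K)%:R.
Proof.
rewrite /nstring foldr_mulop_sdagE ?foldr_mulop_sannE ?enum_uniq // !set_enum.
by rewrite /idop mulrA eq_sym.
Qed.

Definition weight_state (p : nat) : state C N := fun x => (#|x| == p)%:R.

Lemma apply_nstring_weight_state J K q x :
  apply (nstring C J K) (weight_state q) x =
  (J \subset x)%:R * [disjoint x :\: J & K]%:R * (#|(x :\: J) :|: K| == q)%:R.
Proof.
rewrite /apply; under eq_bigr => y _ do rewrite nstringE mulrAC.
by rewrite sumr_delta_r.
Qed.

Definition sector_rowsum A x : C := apply A (weight_state #|x|) x.

Lemma sector_rowsum_nstring_setU1 J K x i :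
  i \notin J -> i \notin K -> i \notin x ->
  sector_rowsum (nstring C J K) (i |: x) = sector_rowsum (nstring C J K) x.
Proof.
move=> i_J i_K i_x; rewrite /sector_rowsum !apply_nstring_weight_state.
have -> : (i |: x) :\: J = i |: (x :\: J).
  by rewrite setDUl; congr (_ :|: _); apply/setDidPl; rewrite disjoints1.
have J_i : J :\ i = J by apply/setDidPl; rewrite disjoint_sym disjoints1.
rewrite -subDset J_i disjoint_setU1 -setUA !cardsU1.
by rewrite !inE (negPf i_K) (negPf i_x) andbF /= eqn_add2l.
Qed.

Lemma sector_rowsum_expansion (c : {set 'I_N} -> {set 'I_N} -> C) x :
  sector_rowsum (expansion c) x =
  \sum_J \sum_K c J K * sector_rowsum (nstring C J K) x.
Proof.
rewrite /sector_rowsum /apply /expansion; under eq_bigr => y _ do rewrite mulr_suml.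
rewrite exchange_big; apply: eq_bigr => J _ /=.
under eq_bigr => y _ do rewrite mulr_suml.
rewrite exchange_big; apply: eq_bigr => K _ /=.
by rewrite mulr_sumr; apply: eq_bigr => y _; rewrite mulrA.
Qed.

Definition coef_range_lt (c : {set 'I_N} -> {set 'I_N} -> C) (R : nat) :=
  forall J K, c J K != 0 ->
    forall a b, a \in J :|: K -> b \in J :|: K -> (dist a b < R)%N.

Lemma sector_rowsum_far_sites c R (i j : 'I_N) x :
  coef_range_lt c R -> ~~ (dist i j < R)%N -> i != j -> i \notin x -> j \notin x ->
  sector_rowsum (expansion c) (i |: (j |: x)) + sector_rowsum (expansion c) x =
  sector_rowsum (expansion c) (i |: x) + sector_rowsum (expansion c) (j |: x).
Proof.
move=> range_c far_ij neq_ij i_x j_x; rewrite !sector_rowsum_expansion -!big_split.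
apply: eq_bigr => J _; rewrite -!big_split; apply: eq_bigr => K _ /=.
rewrite -!mulrDr; have [->|cJK] := eqVneq (c J K) 0; first by rewrite !mul0r.
congr (_ * _); have : (i \notin J :|: K) || (j \notin J :|: K).
  by rewrite -negb_and; apply: contra far_ij => /andP[]; exact: range_c.
case/orP; rewrite inE negb_or => /andP[k_J k_K].
- have i_jx : i \notin j |: x by rewrite in_setU1 negb_or neq_ij.
  rewrite [sector_rowsum _ (i |: (j |: x))]sector_rowsum_nstring_setU1 //.
  by rewrite [sector_rowsum _ (i |: x)]sector_rowsum_nstring_setU1 // addrC.
- have j_ix : j \notin i |: x by rewrite in_setU1 negb_or eq_sym neq_ij.
  rewrite setUCA [sector_rowsum _ (j |: (i |: x))]sector_rowsum_nstring_setU1 //.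
  by rewrite [sector_rowsum _ (j |: x)]sector_rowsum_nstring_setU1.
Qed.

Lemma sector_rowsum_second_difference c R (E : nat -> C) :
  coef_range_lt c R -> (R < N)%N ->
  (forall x, sector_rowsum (expansion c) x = E #|x|) ->
  forall q, (q.+2 <= N)%N -> E q.+2 + E q = E q.+1 + E q.+1.
Proof.
move=> range_c R_lt_N rowE q le_q2N.
have [N_gt0 N1_lt_N] : (0 < N)%N /\ (N.-1 < N)%N by lia.
pose i : 'I_N := Ordinal N_gt0; pose j : 'I_N := Ordinal N1_lt_N.
have far_ij : ~~ (dist i j < R)%N by rewrite /dist /= max0n min0n subn0 -leqNgt; lia.
have neq_ij : i != j by apply/eqP => /(congr1 val) /=; lia.
have [x sub_x card_x] : exists2 x : {set 'I_N}, x \subset ~: [set i; j] & #|x| = q.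
  by apply: exists_subset_card; rewrite cardsCs setCK cards2 neq_ij card_ord; lia.
have [i_x j_x] : i \notin x /\ j \notin x.
  by split; apply/negP => /(subsetP sub_x); rewrite !inE eqxx ?orbT.
have card_ix : #|i |: x| = q.+1 by rewrite cardsU1 i_x card_x.
have card_jx : #|j |: x| = q.+1 by rewrite cardsU1 j_x card_x.
have card_ijx : #|i |: (j |: x)| = q.+2.
  by rewrite cardsU1 in_setU1 negb_or neq_ij i_x card_jx.
have := sector_rowsum_far_sites range_c far_ij neq_ij i_x j_x.
by rewrite !rowE card_ijx card_x card_ix card_jx.
Qed.

Lemma apply_scale A u v (a : C) x :
  (forall y, u y = a * v y) -> apply A u x = a * apply A v x.
Proof.
move=> uE; rewrite /apply mulr_sumr; apply: eq_bigr => y _.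
by rewrite uE mulrCA.
Qed.

Lemma apply_Sdag_weight_state p x :
  apply (@Sdag C N) (weight_state p) x = p.+1%:R * weight_state p.+1 x.
Proof.
rewrite /apply /Sdag; under eq_bigr => y _ do rewrite mulr_suml.
rewrite exchange_big /=.
under eq_bigr => i _ do under eq_bigr => y _ do rewrite sdagE mulrAC.
under eq_bigr => i _ do rewrite sumr_delta_r.
have -> : \sum_i (i \in x)%:R * weight_state p (x :\ i) =
          \sum_(i in x) weight_state p.+1 x.
  rewrite [RHS]big_mkcond; apply: eq_bigr => i _.
  have [x_i|_] := boolP (i \in x); last by rewrite mul0r.
  by rewrite mul1r /weight_state (cardsD1 i x) x_i add1n eqSS.
rewrite sumr_const /weight_state.
by have [->|_] := eqVneq #|x| p.+1; rewrite /= ?mulr1n ?mulr0n ?mulr1 ?mulr0 ?mul0rn.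
Qed.

Lemma dicke_unE p x : dicke_un C p x = p`!%:R * weight_state p x.
Proof.
elim: p x => [|p IH] x; first by rewrite /= /vac /weight_state cards_eq0 mul1r.
rewrite [dicke_un C p.+1]/dicke_un iterS -/(dicke_un C p).
by rewrite (apply_scale _ _ IH) apply_Sdag_weight_state factS natrM mulrCA mulrA.
Qed.

Lemma weight_state_neq0 p : (p <= N)%N -> exists x, weight_state p x != 0.
Proof.
move=> le_pN; have [x _ card_x] : exists2 x : {set 'I_N}, x \subset setT & #|x| = p.
  by apply: exists_subset_card; rewrite cardsT card_ord.
by exists x; rewrite /weight_state card_x eqxx oner_eq0.
Qed.

Lemma sum_sqr_norm_gt0 v : (exists x, v x != 0) -> 0 < \sum_x `|v x| ^+ 2.
Proof.
move=> [x0 vx0]; rewrite (bigD1 x0) //= ltr_pwDl ?sumr_ge0 // => [|x _].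
  by rewrite exprn_gt0 ?normr_gt0.
exact: exprn_ge0.
Qed.

Lemma dicke_prop_weight_state p : (p <= N)%N ->
  exists2 a : C, a != 0 & forall x, dicke C p x = a * weight_state p x.
Proof.
move=> le_pN; have fact_neq0 : p`!%:R != 0 :> C by rewrite pnatr_eq0 -lt0n fact_gt0.
exists ((vnorm (@dicke_un C N p))^-1 * p`!%:R) => [|x]; last first.
  by rewrite /dicke dicke_unE mulrA.
rewrite mulf_neq0 // invr_eq0 sqrtC_eq0 lt0r_neq0 // sum_sqr_norm_gt0 //.
have [x wx] := weight_state_neq0 le_pN.
by exists x; rewrite dicke_unE mulf_neq0.
Qed.

Lemma weight_state_eigen H (E : C) p : (p <= N)%N ->
  apply H (dicke C p) = (fun x => E * dicke C p x) ->
  forall x, apply H (weight_state p) x = E * weight_state p x.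
Proof.
move=> le_pN eigen x; have [a a_neq0 dickeE] := dicke_prop_weight_state le_pN.
apply: (mulfI a_neq0); rewrite -(apply_scale _ _ dickeE) eigen.
by rewrite dickeE mulrCA.
Qed.

Lemma sector_rowsum_eigen H (E : nat -> C) :
  (forall p, (p <= N)%N -> apply H (dicke C p) = (fun x => E p * dicke C p x)) ->
  forall x, sector_rowsum H x = E #|x|.
Proof.
move=> eigen x; have le_xN : (#|x| <= N)%N by rewrite -[X in (_ <= X)%N]card_ord max_card.
by rewrite /sector_rowsum (weight_state_eigen le_xN (eigen _ le_xN)) /weight_state eqxx mulr1.
Qed.

Lemma hermitian_eigenvalue_real H v (E : C) : hermitian_op H ->
  (exists x, v x != 0) -> (forall x, apply H v x = E * v x) -> E \is Num.real.
Proof.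
move=> herm v_neq0 eigen.
pose Q := \sum_x (v x)^* * apply H v x.
have QE : Q = E * \sum_x `|v x| ^+ 2.
  rewrite mulr_sumr; apply: eq_bigr => x _.
  by rewrite eigen normCKC mulrCA.
have Q_real : Q \is Num.real.
  rewrite CrealE rmorph_sum /=; apply/eqP.
  under eq_bigr => x _ do rewrite rmorphM /= conjCK /apply rmorph_sum mulr_sumr /=.
  rewrite exchange_big /=; apply: eq_bigr => y _.
  rewrite mulr_sumr; apply: eq_bigr => x _.
  by rewrite rmorphM /= -herm mulrCA [RHS]mulrCA [v x * _]mulrC.
have norm_pos := sum_sqr_norm_gt0 v_neq0.
rewrite -[E](mulfK (lt0r_neq0 norm_pos)) -QE.
by rewrite rpredM // rpredV gtr0_real.
Qed.

End Qubits.

Theorem theorem1 (C : numClosedFieldType) (N k R : nat) (H : op C N)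
    (E : nat -> C) :
  (0 < k)%N -> (0 < R)%N -> (4 * k * R < N)%N ->
  klocal_range H k R ->
  (forall p, (p <= N)%N -> apply H (@dicke C N p) = (fun x => E p * @dicke C N p x)) ->
  exists Om om : C,
    (forall p, (p <= N)%N -> E p = Om + om * p%:R) /\
    (hermitian_op H -> (Om \is Num.real) /\ (om \is Num.real)).
Proof.
move=> k_gt0 _ NkR [c [-> range_c]] eigen.
have range_cR : coef_range_lt c R by move=> J K /range_c[].
have R_lt_N : (R < N)%N by nia.
have second_diff :=
  sector_rowsum_second_difference range_cR R_lt_N (sector_rowsum_eigen eigen).
exists (E 0%N), (E 1%N - E 0%N); split; first exact: affine_of_second_difference.
move=> herm; suff E_real p : (p <= N)%N -> E p \is Num.real.
  by split; [|apply: rpredB]; apply: E_real; lia.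
move=> le_pN; apply: (hermitian_eigenvalue_real herm (weight_state_neq0 C le_pN)).
exact: weight_state_eigen (eigen p le_pN).
Qed.
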